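(* Let $N$ be the generalised Cartan matrix of type $A_r$ ($r\ge1$) or $A^{(1)}_{r-1}$ ($r\ge 2$), and let $\mathfrak h$, $\alpha_i$, $Z$, $\mathcal A$, $v_1,\dots,v_r$ be as in the context, with $F:\mathfrak h\to\mathrm{Der}(\mathcal A)$ a Lie algebra homomorphism such that $\ker F=Z$ and $F(H)(v_i)=\alpha_i(H)v_i$. Then Problem 1 has a solution, and the set of solutions (tuples $(\delta_1,\dots,\delta_r,\delta_{-1},\dots,\delta_{-r})\in(\mathrm{Im}\,F)^{2r}$ solving Problem 1) is in one-to-one correspondence with the set of solution matrices of $N$.
   Context: The generalised Cartan matrix of type $A_r$ ($r\ge1$) is the $r\times r$ matrix $N=[n(i,j)]$ with $2$ on the diagonal, $-1$ in positions $(i,i\pm1)$ and $0$ elsewhere; that of type $A^{(1)}_1$ is $\begin{pmatrix}2&-2\\-2&2\end{pmatrix}$; that of type $A^{(1)}_{r-1}$ ($r\ge3$) has $2$ on the diagonal, $-1$ in positions $(i,i\pm1)$ and $(1,r),(r,1)$, $0$ elsewhere. A solution matrix of $N$ is an $r\times r$ complex matrix $A=[A_{ij}]$ with all $A_{ii}\ne0$ such that $A'=[A_{ij}/A_{jj}]$ satisfies: $A'_{ij}\in\{0,-1\}$ for $i\ne j$; $A'_{ij}+A'_{ji}=n(j,i)$; and if $A'_{ij}=-1$ then the $i$-th row and $j$-th column of $A'$ have no other entries $-1$. Let $s$ be the corank of $N$, $\mathfrak h$ the complex vector space with basis $H_1,\dots,H_{r+s}$, $\alpha_1,\dots,\alpha_r\in\mathfrak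 h^*$ linearly independent with $\alpha_j(H_i)=n(i,j)$ ($1\le i,j\le r$), and $Z=\bigcap_i\ker\alpha_i$. $\mathcal A$ is a complex commutative algebra, $\mathrm{Der}(\mathcal A)$ its Lie algebra of derivations; for $a\in\mathcal A$, $D\in\mathrm{Der}(\mathcal A)$, $aD$ is $b\mapsto aD(b)$; $v_1,\dots,v_r\in\mathcal A$ are invertible. A solution of Problem 1 is a tuple $\delta_1,\dots,\delta_r,\delta_{-1},\dots,\delta_{-r}\in\mathrm{Im}\,F$ such that, with $\mathbf H_a=F(H_a)$, $\mathbf X_i=v_i\delta_i$, $\mathbf X_{-i}=v_i^{-1}\delta_{-i}$: (a) $[\mathbf H_a,\mathbf H_b]=0$; (b) $[\mathbf X_i,\mathbf X_{-i}]=\mathbf H_i$, $[\mathbf X_i,\mathbf X_{-j}]=0$ ($i\ne j$); (c) $[\mathbf H_a,\mathbf X_{\pm j}]=\pm\alpha_j(H_a)\mathbf X_{\pm j}$; (d) $\mathrm{ad}(\mathbf X_i)^{1-n(i,j)}(\mathbf X_j)=0$ ($i\ne j$); (e) $\mathrm{ad}(\mathbf X_{-i})^{1-n(i,j)}(\mathbf X_{-j})=0$ ($i\ne j$). *)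

(* Complex numbers are modelled as R[i] (complex.v of
   mathcomp-real-closed) over an arbitrary model R of the reals (realType). *)
From HB Require Import structures.
From mathcomp Require Import all_boot all_order all_algebra.
From mathcomp Require Import reals.
From mathcomp Require Import complex.
Set Implicit Arguments. Unset Strict Implicit. Unset Printing Implicit Defensive.
Import Order.TTheory GRing.Theory Num.Theory.
Local Open Scope ring_scope.

Inductive cartan_type := TypeA | TypeA1 (* A^{(1)}_{r-1} *).

(* n(i,j) for indices i j : 'I_r (0-based; the paper's index i+1). *)
Definition cartan_entry (t : cartan_type) (r : nat) (i j : 'I_r) : int :=
  if i == j then 2
  else match t with
       | TypeA => if (i.+1 == j :> nat) || (j.+1 == i :> nat) then -1 else 0
       | TypeA1 =>
           if r == 2%N then -2
           else if (i.+1 == j :> nat) || (j.+1 == i :> nat)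
                   || ((i == 0%N :> nat) && (j == r.-1 :> nat))
                   || ((j == 0%N :> nat) && (i == r.-1 :> nat))
                then -1 else 0
       end.

Definition cartanN (t : cartan_type) (r : nat) : 'M[int]_r :=
  \matrix_(i, j) cartan_entry t i j.

Definition admissible_rank (t : cartan_type) (r : nat) : bool :=
  match t with TypeA => (1 <= r)%N | TypeA1 => (2 <= r)%N end.

Definition cartan_corank (t : cartan_type) : nat :=
  match t with TypeA => 0%N | TypeA1 => 1%N end.

Definition solution_matrix (K : fieldType) (r : nat) (N : 'M[int]_r)
    (A : 'M[K]_r) : Prop :=
  let A' := \matrix_(i, j) (A i j / A j j) in
  (forall i, A i i != 0) /\
  (forall i j, i != j -> A' i j = 0 \/ A' i j = -1) /\
  (forall i j, i != j -> A' i j + A' j i = (N j i)%:~R) /\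
  (forall i j, i != j -> A' i j = -1 ->
     (forall k, k != j -> A' i k != -1) /\ (forall k, k != i -> A' k j != -1)).

Definition is_derivation (K : fieldType) (A : comAlgType K) (D : A -> A) : Prop :=
  (forall (a : K) (x y : A), D (a *: x + y) = a *: D x + D y) /\
  (forall x y : A, D (x * y) = D x * y + x * D y).

Definition lieb (T : zmodType) (D E : T -> T) : T -> T :=
  fun x => D (E x) - E (D x).

Definition lmulD (K : fieldType) (A : comAlgType K) (a : A) (D : A -> A) : A -> A :=
  fun b => a * D b.

(* Standing hypotheses of the corollary.  h = C^(r+s) with basis
   H_a = delta_mx 0 a (a : 'I_(r+s)); the functional alpha_j is encoded by
   the column j of al : alpha_j(h) = (h *m al) 0 j.  H_i for i <= r is
   H_(lshift s i). *)
Section Setting.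
Variables (K : fieldType) (t : cartan_type) (r : nat).
Local Notation s := (cartan_corank t).
Local Notation N := (cartanN t r).
Variables (al : 'M[K]_(r + s, r)) (A : comUnitAlgType K)
  (F : 'rV[K]_(r + s) -> A -> A) (v : 'I_r -> A).

Definition alpha (j : 'I_r) (h : 'rV[K]_(r + s)) : K := (h *m al) 0 j.

Definition Hbasis (a : 'I_(r + s)) : 'rV[K]_(r + s) := delta_mx 0 a.

Definition standing_hyps : Prop :=
  row_free al^T /\
  (forall i j : 'I_r, al (lshift s i) j = (N i j)%:~R) /\
  (forall (c : K) h1 h2 x, F (c *: h1 + h2) x = c *: F h1 x + F h2 x) /\
  (forall h, is_derivation (F h)) /\
  (* F is a Lie algebra homomorphism (h is abelian) *)
  (forall h1 h2 x, lieb (F h1) (F h2) x = 0) /\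
  (* ker F = Z = intersection of the ker alpha_i *)
  (forall h, (forall x, F h x = 0) <-> h *m al = 0) /\
  (forall i, v i \is a GRing.unit) /\
  (forall h i, F h (v i) = alpha i h *: v i).

(* Problem 1, for a tuple (dp_1..dp_r, dm_1..dm_r) = (delta_1.., delta_-1..). *)
Definition problem1 (dp dm : 'I_r -> A -> A) : Prop :=
  let HH := fun a : 'I_(r + s) => F (Hbasis a) in
  let Xp := fun i => lmulD (v i) (dp i) in
  let Xm := fun i => lmulD (v i)^-1 (dm i) in
  (forall i, exists h, dp i = F h) /\
  (forall i, exists h, dm i = F h) /\
  (forall a b x, lieb (HH a) (HH b) x = 0) /\
  (forall i x, lieb (Xp i) (Xm i) x = HH (lshift s i) x) /\
  (forall i j x, i != j -> lieb (Xp i) (Xm j) x = 0) /\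
  (forall a j x, lieb (HH a) (Xp j) x = al a j *: Xp j x) /\
  (forall a j x, lieb (HH a) (Xm j) x = - al a j *: Xm j x) /\
  (forall i j x, i != j ->
     iter `|1 - N i j|%N (lieb (Xp i)) (Xp j) x = 0) /\
  (forall i j x, i != j ->
     iter `|1 - N i j|%N (lieb (Xm i)) (Xm j) x = 0).

End Setting.

(* Since ker F = Z and the alpha_i are linearly independent, F factors through the map
   h |-> (alpha_i(h))_i onto K^r, so Im F is a family of pairwise commuting derivations
   d_c (c in K^r) depending linearly on c, and v_i is a weight vector of weight c |-> c_i.
   For weight vectors u, w of weights mu, nu one has [u d_c, w d_e] = u w d_(nu(c) e - mu(e) c).
   Writing delta_i = d_(P e_i) and delta_-i = d_(Q e_i), condition (b) thus becomes a system
   of quadratic equations in the entries of P and Q, which holds exactly when P is a solution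
   matrix of N and Q_ki = - P_ik / (P_ii P_kk).  Conditions (a) and (c) are then automatic,
   and the Serre relations (d), (e) follow from an explicit computation of ad(X_i)^m X_j in
   each of the four possible cases for (A'_ij, A'_ji) in {0,-1}^2.  Solution matrices exist:
   take 1 on the diagonal and -1 at (i, i+1), indices read cyclically in the affine case. *)

From HB Require Import structures.
From mathcomp Require Import all_boot all_order all_algebra.
From mathcomp Require Import reals complex.
From mathcomp Require Import ring zify.
From Stdlib Require Import FunctionalExtensionality ProofIrrelevance ClassicalEpsilon.
Import Order.TTheory GRing.Theory Num.Theory.
Local Open Scope ring_scope.
Set Implicit Arguments. Unset Strict Implicit. Unset Printing Implicit Defensive.

Lemma exists_bijective_inverse (T U : Type) (g : U -> T) :
  injective g -> (forall x, exists y, g y = x) -> exists f : T -> U, bijective f.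
Proof.
move=> g_inj g_surj.
pose f x := proj1_sig (constructive_indefinite_description _ (g_surj x)).
have gK : cancel f g by move=> x; rewrite /f; case: constructive_indefinite_description.
by exists f, g => // y; apply: g_inj; rewrite gK.
Qed.

Lemma addr_self_eq0 (V : zmodType) (x : V) : x + x = x -> x = 0.
Proof. by move/(congr1 (fun y => y - x)); rewrite addrK subrr. Qed.

Section CommutingDerivations.
Variables (K : fieldType) (A : comUnitAlgType K) (n : nat).
Variable der : 'rV[K]_n -> A -> A.
Hypothesis der_linear : forall a c1 c2 x, der (a *: c1 + c2) x = a *: der c1 x + der c2 x.
Hypothesis der_leibniz : forall c x y, der c (x * y) = der c x * y + x * der c y.
Hypothesis der_comm : forall c1 c2 x, der c1 (der c2 x) = der c2 (der c1 x).

Lemma der0 x : der 0 x = 0.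
Proof. by apply: addr_self_eq0; rewrite -{1}[der 0 x]scale1r -der_linear scale1r addr0. Qed.

Lemma derD c1 c2 x : der (c1 + c2) x = der c1 x + der c2 x.
Proof. by rewrite -[c1]scale1r der_linear !scale1r. Qed.

Lemma derZ a c x : der (a *: c) x = a *: der c x.
Proof. by rewrite -[a *: c]addr0 der_linear der0 addr0. Qed.

Lemma derB c1 c2 x : der (c1 - c2) x = der c1 x - der c2 x.
Proof. by rewrite derD -[- c2]scaleN1r derZ scaleN1r. Qed.

Lemma der1 c : der c 1 = 0.
Proof.
by apply: addr_self_eq0; rewrite -{1}[der c 1]mulr1 -{2}[der c 1]mul1r -der_leibniz mulr1.
Qed.

Definition weight_vector (mu : 'rV[K]_n -> K) (w : A) := forall c, der c w = mu c *: w.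

Lemma weight_vector1 : weight_vector (fun=> 0) 1.
Proof. by move=> c; rewrite der1 scale0r. Qed.

Lemma weight_vectorM mu nu u w : weight_vector mu u -> weight_vector nu w ->
  weight_vector (fun c => mu c + nu c) (u * w).
Proof. by move=> hu hw c; rewrite der_leibniz hu hw -scalerAl -scalerAr scalerDl. Qed.

Lemma weight_vectorX mu u m : weight_vector mu u ->
  weight_vector (fun c => m%:R * mu c) (u ^+ m).
Proof.
move=> hu; elim: m => [|m IH] c; first by rewrite expr0 mul0r scale0r der1.
by rewrite exprS (weight_vectorM hu IH) mulrS mulrDl mul1r.
Qed.

Lemma weight_vectorV mu u : u \is a GRing.unit -> weight_vector mu u ->
  weight_vector (fun c => - mu c) u^-1.
Proof.
move=> uU hu c; apply: (mulrI uU).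
have := der_leibniz c u u^-1; rewrite mulrV // der1 hu -scalerAl mulrV //.
by move/esym/eqP; rewrite addrC addr_eq0 => /eqP ->; rewrite -scalerAr mulrV // scaleNr.
Qed.

Lemma lieb_lmulD mu nu u w c1 c2 : weight_vector mu u -> weight_vector nu w ->
  lieb (lmulD u (der c1)) (lmulD w (der c2)) =
  lmulD (u * w) (der (nu c1 *: c2 - mu c2 *: c1)).
Proof.
move=> hu hw; apply: functional_extensionality => x.
rewrite /lieb /lmulD !der_leibniz hu hw derB !derZ (der_comm c2 c1).
rewrite -[nu c1 *: w]mulr_algl -[mu c2 *: u]mulr_algl.
rewrite -[nu c1 *: der c2 x]mulr_algl -[mu c2 *: der c1 x]mulr_algl.
ring.
Qed.

Fixpoint iter_lieb_coef (mui muj : 'rV[K]_n -> K) (ci cj : 'rV[K]_n) m : 'rV[K]_n :=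
  if m is m'.+1 then
    let g := iter_lieb_coef mui muj ci cj m' in (m'%:R * mui ci + muj ci) *: g - mui g *: ci
  else cj.

Lemma iter_lieb_lmulD mui muj wi wj ci cj m :
  weight_vector mui wi -> weight_vector muj wj ->
  iter m (lieb (lmulD wi (der ci))) (lmulD wj (der cj)) =
  lmulD (wi ^+ m * wj) (der (iter_lieb_coef mui muj ci cj m)).
Proof.
move=> hi hj; elim: m => [|m IH] /=; first by rewrite expr0 mul1r.
by rewrite IH (lieb_lmulD _ _ hi (weight_vectorM (weight_vectorX m hi) hj)) exprS mulrA.
Qed.

Lemma iter_lieb_eq0 (eps : K) i j wi wj (ci cj : 'rV[K]_n) (a b : bool) m x :
  weight_vector (fun c => eps * c 0 i) wi -> weight_vector (fun c => eps * c 0 j) wj ->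
  cj 0 i = - a%:R * cj 0 j -> ci 0 j = - b%:R * ci 0 i -> m = (1 + a + b)%N ->
  iter m (lieb (lmulD wi (der ci))) (lmulD wj (der cj)) x = 0.
Proof.
move=> hi hj hcj hci ->; rewrite (iter_lieb_lmulD _ _ _ hi hj) /lmulD.
suff -> : iter_lieb_coef (fun c => eps * c 0 i) (fun c => eps * c 0 j) ci cj (1 + a + b) = 0.
  by rewrite der0 mulr0.
apply/rowP => k; case: a b hcj hci => [] [] /= hcj hci; rewrite !mxE ?hcj ?hci; ring.
Qed.

End CommutingDerivations.

Lemma oner_neqN1 (K : numDomainType) : (1 : K) != -1.
Proof. by rewrite -addr_eq0 -[1 + 1]/(2%:R : K) pnatr_eq0. Qed.

Lemma zero_or_N1_neq1 (K : numDomainType) (x : K) : x = 0 \/ x = -1 -> x != 1.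
Proof. by case=> ->; rewrite eq_sym ?oner_eq0 ?oner_neqN1. Qed.

Section SolutionMatrices.
Variables (K : numFieldType) (r : nat) (N : 'M[int]_r).
Hypothesis N_diag : forall i, N i i = 2.
Hypothesis N_sym : forall i j, N i j = N j i.
Implicit Types P Q a : 'M[K]_r.

Definition normalized P : 'M[K]_r := \matrix_(i, j) (P i j / P j j).

Definition dual_solution P : 'M[K]_r := \matrix_(k, i) (- P i k / (P i i * P k k)).

Definition solution_pattern a : Prop :=
  [/\ forall i j, i != j -> a i j = 0 \/ a i j = -1,
      forall i j, i != j -> a i j + a j i = (N j i)%:~R &
      forall i j, i != j -> a i j = -1 ->
        (forall k, k != j -> a i k != -1) /\ (forall k, k != i -> a k j != -1)].

Definition normalized_bracket_relations a : Prop :=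
  (forall i k, a i k + a k i = (N i k)%:~R) /\
  (forall i j k, i != j -> a j i * (a j k + a k i) = 0).

Definition bracket_relations P Q : Prop :=
  forall i j k, - P j i * Q k j - Q i j * P k i = if i == j then (N i k)%:~R else 0.

Lemma solution_matrixE P :
  solution_matrix N P <-> (forall i, P i i != 0) /\ solution_pattern (normalized P).
Proof.
by split=> [[? [? [? ?]]]|[? [? ? ?]]]; split.
Qed.

Lemma solution_patternP a : (forall i, a i i = 1) ->
  solution_pattern a <-> normalized_bracket_relations a.
Proof.
move=> a1; split=> [[off sum uniq]|[sum prod]].
  have off0 i j : i != j -> a i j != -1 -> a i j = 0.
    by move=> ij; case: (off i j ij) => // ->; rewrite eqxx.
  split=> [i k|i j k ij].
    have [<-|ik] := eqVneq i k; first by rewrite a1 N_diag.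
    by rewrite sum // N_sym.
  have ji : j != i by rewrite eq_sym.
  have [->|aji] := off j i ji; first by rewrite mul0r.
  have [rowj coli] := uniq j i ji aji.
  suff -> : a j k + a k i = 0 by rewrite mulr0.
  have [->|kj] := eqVneq k j; first by rewrite a1 aji subrr.
  have [->|ki] := eqVneq k i; first by rewrite a1 aji addrC subrr.
  have jk : j != k by rewrite eq_sym.
  by rewrite (off0 j k jk (rowj k ki)) (off0 k i ki (coli k kj)) addr0.
have off i j : i != j -> a i j = 0 \/ a i j = -1.
  move=> ij; have := prod j i j; rewrite eq_sym ij a1 => /(_ isT) /eqP.
  by rewrite mulf_eq0 addr_eq0 => /orP[] /eqP; [left|right].
split=> // [i j ij|i j ij aij]; first by rewrite sum N_sym.
have ji : j != i by rewrite eq_sym.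
have sum0 k : a i k + a k j = 0.
  by apply/eqP; move: (prod j i k ji); rewrite aij => /eqP; rewrite mulf_eq0 oppr_eq0 oner_eq0.
split=> k hk; apply/eqP => akN1.
  have [eik|ik] := eqVneq i k.
    by move: akN1; rewrite -eik a1 => /eqP; rewrite (negbTE (oner_neqN1 K)).
  have /eqP := sum0 k; rewrite akN1 addrC subr_eq0 => /eqP ak1.
  by move: (zero_or_N1_neq1 (off k j hk)); rewrite ak1 eqxx.
have [ejk|_] := eqVneq j k.
  by move: akN1; rewrite -ejk a1 => /eqP; rewrite (negbTE (oner_neqN1 K)).
have /eqP := sum0 k; rewrite akN1 subr_eq0 => /eqP ak1.
by move: hk; rewrite eq_sym => /off/zero_or_N1_neq1; rewrite ak1 eqxx.
Qed.

Lemma normalized_diag P i : P i i != 0 -> normalized P i i = 1.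
Proof. by move=> Pi; rewrite mxE divff. Qed.

Lemma dual_bracket_coord P i j k : P i i != 0 -> P j j != 0 -> P k k != 0 ->
  - P j i * dual_solution P k j - dual_solution P i j * P k i =
  P i i / P j j * (normalized P j i * (normalized P j k + normalized P k i)).
Proof. by move=> Pi Pj Pk; rewrite !mxE; field; rewrite Pi Pj Pk. Qed.

Lemma dual_bracket_relationsP P : (forall i, P i i != 0) ->
  bracket_relations P (dual_solution P) <-> normalized_bracket_relations (normalized P).
Proof.
move=> Pnz; split=> [rel|[sum prod] i j k].
  split=> [i k|i j k ij].
    by have := rel i i k; rewrite dual_bracket_coord // eqxx divff // normalized_diag // !mul1r.
  have /eqP := rel i j k; rewrite dual_bracket_coord // (negbTE ij) mulf_eq0.
  by rewrite mulf_eq0 invr_eq0 !(negbTE (Pnz _)) => /eqP.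
rewrite dual_bracket_coord //; have [<-|ij] := eqVneq i j.
  by rewrite divff // normalized_diag // !mul1r sum.
by rewrite prod // mulr0.
Qed.

Lemma solution_matrix_dualP P :
  solution_matrix N P <-> (forall i, P i i != 0) /\ bracket_relations P (dual_solution P).
Proof.
rewrite solution_matrixE; split=> -[Pnz rel]; split=> //;
  have P1 i := normalized_diag (Pnz i).
  exact/dual_bracket_relationsP/solution_patternP.
exact/solution_patternP/dual_bracket_relationsP.
Qed.

Lemma bracket_relationsP P Q :
  bracket_relations P Q <-> solution_matrix N P /\ Q = dual_solution P.
Proof.
split=> [rel|[/solution_matrix_dualP[_ rel] ->] //].
have diag i : P i i * Q i i = -1.
  have := rel i i i; rewrite eqxx N_diag -[(2 : int)%:~R]/(2 : K) => h.
  have two : (2 : K) != 0 by rewrite pnatr_eq0.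
  by apply: (mulfI two); rewrite mulrN1 -[in RHS]h; ring.
have Pnz i : P i i != 0.
  by apply/eqP => Pi0; move: (diag i); rewrite Pi0 mul0r => /eqP; rewrite eq_sym oppr_eq0 oner_eq0.
have cross i j : P i i * Q i j = P j i * Q j j.
  have [<-//|ij] := eqVneq i j.
  have := rel i j j; have := rel i j i; rewrite (negbTE ij) => h1 h2.
  have : P i i * Q i j - P j i * Q j j =
    (- P j i * Q j j - Q i j * P j i) - (- P j i * Q i j - Q i j * P i i) by ring.
  by rewrite h1 h2 subrr => /eqP; rewrite subr_eq0 => /eqP.
have dualQ : Q = dual_solution P.
  apply/matrixP => i j; rewrite mxE; apply: (mulfI (Pnz i)); rewrite cross.
  have Qj : Q j j = - (P j j)^-1.
    by apply: (mulfI (Pnz j)); rewrite diag; field; rewrite Pnz.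
  by rewrite Qj; field; rewrite !Pnz.
by split=> //; apply/solution_matrix_dualP; rewrite -dualQ.
Qed.

Lemma dual_solution_ratio P i j x : P i i != 0 -> P j j != 0 ->
  P j i = x * P i i -> dual_solution P i j = x * dual_solution P j j.
Proof. by move=> Pi Pj Pji; rewrite !mxE Pji; field; rewrite Pi Pj. Qed.

Lemma solution_matrix_serre P i j : solution_matrix N P -> i != j ->
  exists a b : bool, [/\ P i j = - a%:R * P j j, P j i = - b%:R * P i i,
    dual_solution P j i = - a%:R * dual_solution P i i,
    dual_solution P i j = - b%:R * dual_solution P j j &
    `|1 - N i j|%N = (1 + a + b)%N].
Proof.
move=> /solution_matrixE[Pnz [off sum _]] ij.
have ratio k l : k != l -> exists c : bool, P k l = - c%:R * P l l.
  move=> kl; have Pkl : P k l = normalized P k l * P l l by rewrite mxE divfK.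
  by case: (off k l kl) => h; [exists false | exists true]; rewrite Pkl h ?oppr0 // mulr1n.
have ji : j != i by rewrite eq_sym.
have [a ha] := ratio i j ij; have [b hb] := ratio j i ji.
exists a, b; split=> //; [exact: dual_solution_ratio | exact: dual_solution_ratio |].
have /intr_inj -> : (N i j)%:~R = (- (a + b)%N%:Z)%:~R :> K.
  by rewrite intrN -pmulrn N_sym -sum // !mxE ha hb natrD opprD; field; rewrite !Pnz.
by rewrite opprK -PoszD addnA.
Qed.
End SolutionMatrices.

Section BaseSolution.
Variables (t : cartan_type) (r : nat).
Implicit Types i j k : 'I_r.

Lemma cartan_diag i : cartanN t r i i = 2.
Proof. by rewrite mxE /cartan_entry eqxx. Qed.

Lemma cartan_sym i j : cartanN t r i j = cartanN t r j i.
Proof.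
rewrite !mxE /cartan_entry eq_sym; case: (j == i) => //; case: t.
  by rewrite orbC.
by rewrite [(j.+1 == i :> nat) || _]orbC orbAC.
Qed.

(* In type A^(1)_1 both (0, 1) and (1, 0) are successor pairs, giving the entry -2. *)
Definition cartan_succ i j : bool :=
  (j == i.+1 :> nat) ||
  if t is TypeA1 then (i == r.-1 :> nat) && (j == 0 :> nat) else false.

Lemma cartan_succ_functional i j k : cartan_succ i j -> cartan_succ i k -> j = k.
Proof.
move=> hj hk; apply/val_inj; move: (ltn_ord i) (ltn_ord j) (ltn_ord k) hj hk.
by rewrite /cartan_succ; case: t => /=; lia.
Qed.

Lemma cartan_succ_injective i j k : cartan_succ i j -> cartan_succ k j -> i = k.
Proof.
move=> hi hk; apply/val_inj; move: (ltn_ord i) (ltn_ord j) (ltn_ord k) hi hk.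
by rewrite /cartan_succ; case: t => /=; lia.
Qed.

Lemma cartan_succ_entry i j : i != j ->
  ((if cartan_succ i j then -1 else 0) + (if cartan_succ j i then -1 else 0) : int) =
  cartanN t r j i.
Proof.
move=> ij; rewrite mxE /cartan_entry eq_sym (negbTE ij) /cartan_succ.
move: (ltn_ord i) (ltn_ord j) ij; rewrite -val_eqE /=.
by case: t => /=; repeat case: ifP; lia.
Qed.

Definition base_solution (K : fieldType) : 'M[K]_r :=
  \matrix_(i, j) if i == j then 1 else if cartan_succ i j then -1 else 0.

Lemma base_solution_matrix (K : numFieldType) :
  solution_matrix (cartanN t r) (base_solution K).
Proof.
have diag i : base_solution K i i = 1 by rewrite mxE eqxx.
have off i j : i != j -> base_solution K i j = if cartan_succ i j then -1 else 0.
  by move=> ij; rewrite mxE (negbTE ij).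
have zeroN1 : (0 : K) != -1 by rewrite eq_sym oppr_eq0 oner_eq0.
apply/solution_matrixE; split=> [i|]; first by rewrite diag oner_eq0.
have -> : normalized (base_solution K) = base_solution K.
  by apply/matrixP => i j; rewrite mxE diag divr1.
split=> [i j ij|i j ij|i j ij].
- by rewrite off //; case: ifP; [right|left].
- rewrite off // off 1?eq_sym // -(cartan_succ_entry ij) intrD.
  by case: (cartan_succ i j); case: (cartan_succ j i); rewrite ?intrN.
rewrite off //; case: ifP => [sij _|_ /eqP]; last by rewrite (negbTE zeroN1).
split=> k hk.
  have [<-|ik] := eqVneq i k; first by rewrite diag oner_neqN1.
  rewrite off //; case: ifP => // sik.
  by move: hk; rewrite (cartan_succ_functional sij sik) eqxx.
have [->|kj] := eqVneq k j; first by rewrite diag oner_neqN1.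
rewrite off //; case: ifP => // skj.
by move: hk; rewrite (cartan_succ_injective sij skj) eqxx.
Qed.
End BaseSolution.

Section Problem1.
Variables (K : numFieldType) (t : cartan_type) (r : nat).
Local Notation s := (cartan_corank t).
Local Notation N := (cartanN t r).
Variables (al : 'M[K]_(r + s, r)) (A : comUnitAlgType K).
Variables (F : 'rV[K]_(r + s) -> A -> A) (v : 'I_r -> A).
Hypothesis hyps : standing_hyps al F v.

Let al_free : row_free al^T. Proof. by case: hyps. Qed.
Let al_cartan i j : al (lshift s i) j = (N i j)%:~R. Proof. by case: hyps => _ []. Qed.
Let F_linear c h1 h2 x : F (c *: h1 + h2) x = c *: F h1 x + F h2 x.
Proof. by case: hyps => _ [_ []]. Qed.
Let F_leibniz h x y : F h (x * y) = F h x * y + x * F h y.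
Proof. by case: hyps => _ [_ [_ [/(_ h) []]]]. Qed.
Let F_comm h1 h2 x : lieb (F h1) (F h2) x = 0.
Proof. by case: hyps => _ [_ [_ [_ []]]]. Qed.
Let F_ker h : (forall x, F h x = 0) <-> h *m al = 0.
Proof. by case: hyps => _ [_ [_ [_ [_ []]]]]. Qed.
Let v_unit i : v i \is a GRing.unit.
Proof. by case: hyps => _ [_ [_ [_ [_ [_ []]]]]]. Qed.
Let F_v h i : F h (v i) = alpha al i h *: v i.
Proof. by case: hyps => _ [_ [_ [_ [_ [_ []]]]]]. Qed.

(* The element F h of Im F with (alpha_i(h))_i = c ([pinvmx al] is a right inverse of al). *)
Definition der_coord (c : 'rV[K]_r) : A -> A := F (c *m pinvmx al).

Definition delta_of (M : 'M[K]_r) : 'I_r -> A -> A := fun i => der_coord (row i M^T).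

Lemma pinvmx_al : pinvmx al *m al = 1%:M.
Proof.
have : (1%:M <= al)%MS by rewrite sub1mx /row_full -mxrank_tr.
by move/mulmxKpV; rewrite mul1mx.
Qed.

Let der_coord_linear a c1 c2 x :
  der_coord (a *: c1 + c2) x = a *: der_coord c1 x + der_coord c2 x.
Proof. by rewrite /der_coord mulmxDl -scalemxAl F_linear. Qed.

Let der_coord_leibniz c x y :
  der_coord c (x * y) = der_coord c x * y + x * der_coord c y.
Proof. exact: F_leibniz. Qed.

Let der_coord_comm c1 c2 x :
  der_coord c1 (der_coord c2 x) = der_coord c2 (der_coord c1 x).
Proof. by apply/eqP; rewrite -subr_eq0; apply/eqP; exact: F_comm. Qed.

Lemma F_der_coord h x : F h x = der_coord (h *m al) x.
Proof.
apply/eqP; rewrite -subr_eq0 -(derB F_linear); apply/eqP; move: x; apply/F_ker.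
by rewrite mulmxBl -[_ *m pinvmx al *m al]mulmxA pinvmx_al mulmx1 subrr.
Qed.

Lemma der_coord_inj c1 c2 : (forall x, der_coord c1 x = der_coord c2 x) -> c1 = c2.
Proof.
move=> e; apply/eqP; rewrite -subr_eq0; apply/eqP.
have /F_ker : forall x, F ((c1 - c2) *m pinvmx al) x = 0.
  by move=> x; rewrite mulmxBl (derB F_linear) -/(der_coord c1 x) e subrr.
by rewrite -mulmxA pinvmx_al mulmx1.
Qed.

Lemma delta_of_inj : injective delta_of.
Proof.
move=> M M' e; apply/matrixP => k i.
have /rowP/(_ k) := der_coord_inj (equal_f (equal_f e i)).
by rewrite !mxE.
Qed.

Lemma delta_of_imF (d : 'I_r -> A -> A) :
  (forall i, exists h, d i = F h) -> exists M, d = delta_of M.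
Proof.
move=> hd; have coord i : exists c, d i = der_coord c.
  have [h ->] := hd i.
  by exists (h *m al); apply: functional_extensionality; exact: F_der_coord.
have [c hc] := fin_all_exists coord.
exists (\matrix_(k, i) c i 0 k); apply: functional_extensionality => i.
by rewrite hc /delta_of; congr der_coord; apply/rowP => k; rewrite !mxE.
Qed.

Lemma v_weight i : weight_vector der_coord (fun c => c 0 i) (v i).
Proof. by move=> c; rewrite /der_coord F_v /alpha -mulmxA pinvmx_al mulmx1. Qed.

Lemma v_inv_weight i : weight_vector der_coord (fun c => - c 0 i) (v i)^-1.
Proof. exact: (weight_vectorV der_coord_leibniz (v_unit i) (v_weight i)). Qed.

Lemma lieb_F_weight h mu w c x : weight_vector der_coord mu w ->
  lieb (F h) (lmulD w (der_coord c)) x = mu (h *m al) *: lmulD w (der_coord c) x.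
Proof.
move=> hw; have -> : F h = lmulD 1 (der_coord (h *m al)).
  by apply: functional_extensionality => y; rewrite /lmulD mul1r F_der_coord.
rewrite (lieb_lmulD der_coord_linear der_coord_leibniz der_coord_comm _ _
  (weight_vector1 der_coord_leibniz) hw).
by rewrite scale0r subr0 /lmulD mul1r (derZ der_coord_linear) scalerAr.
Qed.

Lemma lieb_delta_of P Q i j :
  lieb (lmulD (v i) (delta_of P i)) (lmulD (v j)^-1 (delta_of Q j)) =
  lmulD (v i / v j) (der_coord (\row_k (- P j i * Q k j - Q i j * P k i))).
Proof.
rewrite (lieb_lmulD der_coord_linear der_coord_leibniz der_coord_comm _ _
  (v_weight i) (v_inv_weight j)).
by congr (lmulD _ (der_coord _)); apply/rowP => k; rewrite !mxE.
Qed.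

Lemma problem1_bracketP P Q :
  (forall i x, lieb (lmulD (v i) (delta_of P i)) (lmulD (v i)^-1 (delta_of Q i)) x =
               F (Hbasis K (lshift s i)) x) /\
  (forall i j x, i != j ->
     lieb (lmulD (v i) (delta_of P i)) (lmulD (v j)^-1 (delta_of Q j)) x = 0)
  <-> bracket_relations N P Q.
Proof.
have Hrow i : Hbasis K (lshift s i) *m al = \row_k (N i k)%:~R.
  by apply/rowP => k; rewrite /Hbasis -rowE !mxE al_cartan mxE.
have vU i j : v i / v j \is a GRing.unit by rewrite unitrM unitrV !v_unit.
split=> [[hb1 hb2] i j k|rel].
  have [<-|ij] := eqVneq i j.
    have /rowP/(_ k) : \row_k (- P i i * Q k i - Q i i * P k i) = \row_k (N i k)%:~R.
      apply: der_coord_inj => x; move: (hb1 i x).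
      by rewrite lieb_delta_of /lmulD divrr // mul1r F_der_coord Hrow.
    by rewrite !mxE.
  have /rowP/(_ k) : \row_k (- P j i * Q k j - Q i j * P k i) = 0 :> 'rV[K]_r.
    apply: der_coord_inj => x; apply: (mulrI (vU i j)); move: (hb2 i j x ij).
    by rewrite lieb_delta_of /lmulD (der0 der_coord_linear) mulr0.
  by rewrite !mxE.
split=> [i x|i j x ij]; rewrite lieb_delta_of /lmulD.
  rewrite divrr // mul1r F_der_coord Hrow; congr der_coord; apply/rowP => k.
  by rewrite [LHS]mxE rel eqxx [RHS]mxE.
have -> : \row_k (- P j i * Q k j - Q i j * P k i) = 0 :> 'rV[K]_r.
  by apply/rowP => k; rewrite !mxE rel (negbTE ij).
by rewrite (der0 der_coord_linear) mulr0.
Qed.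

Lemma problem1_solution_matrix M : solution_matrix N M ->
  problem1 al F v (delta_of M) (delta_of (dual_solution M)).
Proof.
move=> hM; have rel : bracket_relations N M (dual_solution M).
  exact/(bracket_relationsP (@cartan_diag t r) (@cartan_sym t r)).
have [hb1 hb2] := (problem1_bracketP M (dual_solution M)).2 rel.
have wp k : weight_vector der_coord (fun c => 1 * c 0 k) (v k).
  by move=> c; rewrite mul1r v_weight.
have wm k : weight_vector der_coord (fun c => -1 * c 0 k) (v k)^-1.
  by move=> c; rewrite mulN1r v_inv_weight.
rewrite /problem1 /=; split; first by move=> i; exists (row i M^T *m pinvmx al).
split; first by move=> i; exists (row i (dual_solution M)^T *m pinvmx al).
split; first by move=> a b x; exact: F_comm.
split; first exact: hb1.
split; first exact: hb2.
split; first by move=> a j x; rewrite (lieb_F_weight _ _ _ (v_weight j)) /Hbasis -rowE mxE.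
split; first by move=> a j x; rewrite (lieb_F_weight _ _ _ (v_inv_weight j)) /Hbasis -rowE mxE.
split=> i j x ij; have [a [b [Pij Pji Qji Qij hn]]] :=
  solution_matrix_serre (@cartan_sym t r) hM ij.
  apply: (iter_lieb_eq0 der_coord_linear der_coord_leibniz der_coord_comm x
    (wp i) (wp j) _ _ hn); by rewrite !mxE.
rewrite !mxE in Qij Qji.
apply: (iter_lieb_eq0 der_coord_linear der_coord_leibniz der_coord_comm x
  (wm i) (wm j) _ _ (etrans hn (addnAC 1 a b))); by rewrite !mxE.
Qed.

Lemma problem1_coordinates dp dm : problem1 al F v dp dm ->
  exists2 M, solution_matrix N M & (dp, dm) = (delta_of M, delta_of (dual_solution M)).
Proof.
rewrite /problem1 /= => -[hdp [hdm [_ [hb1 [hb2 _]]]]].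
have [P eP] := delta_of_imF hdp; have [Q eQ] := delta_of_imF hdm; subst dp dm.
have /(bracket_relationsP (@cartan_diag t r) (@cartan_sym t r)) [hP ->] :
  bracket_relations N P Q by apply/problem1_bracketP; split.
by exists P.
Qed.
End Problem1.

Theorem corollary3p15 (R : realType) (t : cartan_type) (r : nat)
  (al : 'M[R[i]]_(r + cartan_corank t, r)) (A : comUnitAlgType R[i])
  (F : 'rV[R[i]]_(r + cartan_corank t) -> A -> A) (v : 'I_r -> A) :
  admissible_rank t r ->
  standing_hyps al F v ->
  (exists dp dm : 'I_r -> A -> A, problem1 al F v dp dm) /\
  exists f : {d : ('I_r -> A -> A) * ('I_r -> A -> A) | problem1 al F v d.1 d.2} ->
             {M : 'M[R[i]]_r | solution_matrix (cartanN t r) M},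
    bijective f.
Proof.
move=> _ hyps.
pose g (M : {M : 'M[R[i]]_r | solution_matrix (cartanN t r) M}) :
    {d : ('I_r -> A -> A) * ('I_r -> A -> A) | problem1 al F v d.1 d.2} :=
  exist _ (delta_of al F (proj1_sig M), delta_of al F (dual_solution (proj1_sig M)))
    (problem1_solution_matrix hyps (proj2_sig M)).
split.
  exists (delta_of al F (base_solution t r R[i])).
  exists (delta_of al F (dual_solution (base_solution t r R[i]))).
  exact/problem1_solution_matrix/base_solution_matrix.
apply: (@exists_bijective_inverse _ _ g).
  move=> [M hM] [M' hM'] /(congr1 (fun d => (proj1_sig d).1)) /= /(delta_of_inj hyps) eM.
  exact: subset_eq_compat.
move=> [[dp dm] hd]; have [M hM eM] := problem1_coordinates hyps hd.
by exists (exist _ M hM); apply: subset_eq_compat.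
Qed.
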